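(* Let $T$ be a tree of order at least $6$. Then $T\in\mathcal{O}'$ if and only if the set of weak support vertices of $T$ is a maximum $2$-packing in $T$.
   Context: A weak support vertex is a vertex adjacent to exactly one leaf. A $2$-packing of a graph $G$ is a set $S\subseteq V(G)$ whose vertices are pairwise at distance at least $3$; a maximum $2$-packing is one of maximum cardinality $\rho(G)$. $2$-subdivision: let $G$ be a connected graph of order at least $2$ and $\mathcal{P}=\{\mathcal{P}(v):v\in V(G)\}$ where $\mathcal{P}(v)$ is a partition of $N_G(v)$ (into nonempty blocks). $G(\mathcal{P})$ has vertex set $V(G)\cup(V(G)\times\{1\})\cup\bigcup_{v\in V(G)}(\{v\}\times\mathcal{P}(v))$ and edge set $E_1\cup E_2\cup E_3$, where $E_1=\{v(v,1):v\in V(G)\}$, $E_2=\{v(v,A): v\in V(G), A\in\mathcal{P}(v)\}$, and $E_3=\{(u,A)(v,B): uv\in E(G), A\in\mathcal{P}(u), B\in\mathcal{P}(v), v\in A, u\in B\}$. $\mathcal{O}'$ is the family of all trees isomorphic to some $R(\mathcal{P})$ where $R$ is a tree of order at least $2$ and $\mathcal{P}$ is such a family of partitions. *)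

From mathcomp Require Import all_boot.
Set Implicit Arguments. Unset Strict Implicit. Unset Printing Implicit Defensive.

Section Graphs.
Variable T : finType.

Definition simple_graph (e : rel T) : Prop := symmetric e /\ irreflexive e.

(* no cycle: no simple closed walk x :: p with at least 3 vertices *)
Definition acyclic (e : rel T) : Prop :=
  forall (x : T) (p : seq T), path e x p -> uniq (x :: p) -> 2 <= size p ->
    ~~ e (last x p) x.

Definition connected (e : rel T) : Prop := forall x y : T, connect e x y.

Definition is_tree (e : rel T) : Prop := simple_graph e /\ connected e /\ acyclic e.

Definition nbhd (e : rel T) (v : T) : {set T} := [set w | e v w].

Definition leaf (e : rel T) (v : T) : bool := #|nbhd e v| == 1.

Definition weak_support (e : rel T) (v : T) : bool :=
  #|[set w | e v w & leaf e w]| == 1.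

Definition weak_supports (e : rel T) : {set T} := [set v | weak_support e v].

Definition dist_ge3 (e : rel T) (u v : T) : Prop :=
  forall p : seq T, path e u p -> last u p = v -> 3 <= size p.

Definition two_packing (e : rel T) (S : {set T}) : Prop :=
  forall u v, u \in S -> v \in S -> u != v -> dist_ge3 e u v.

Definition max_two_packing (e : rel T) (S : {set T}) : Prop :=
  two_packing e S /\ forall S' : {set T}, two_packing e S' -> #|S'| <= #|S|.

End Graphs.

Definition isomorphic (T1 T2 : finType) (e1 : rel T1) (e2 : rel T2) : Prop :=
  exists f : T1 -> T2, bijective f /\ forall x y, e2 (f x) (f y) = e1 x y.

(* The 2-subdivision G(P).  Raw vertices: inl (inl v) = v, inl (inr v) = (v,1),
   inr (v, A) = (v, A); the vertices (v,A) are kept only when A \in P v. *)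
Section Subdivision.
Variables (V : finType) (eR : rel V) (P : V -> {set {set V}}).

Definition sub_raw : finType := ((V + V) + (V * {set V}))%type.

Definition sub_valid (x : sub_raw) : bool :=
  match x with
  | inr (v, A) => A \in P v
  | _ => true
  end.

Definition sub_vert : finType := {x : sub_raw | sub_valid x}.

Definition sub_raw_adj (x y : sub_raw) : bool :=
  match x, y with
  | inl (inl v), inl (inr w) => v == w
  | inl (inr v), inl (inl w) => v == w
  | inl (inl v), inr (w, _) => v == w
  | inr (w, _), inl (inl v) => v == w
  | inr (u, A), inr (v, B) => [&& eR u v, v \in A & u \in B]
  | _, _ => false
  end.

Definition sub_adj : rel sub_vert := fun x y => sub_raw_adj (val x) (val y).

End Subdivision.

Definition in_Oprime (T : finType) (e : rel T) : Prop :=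
  exists (V : finType) (eR : rel V),
    is_tree eR /\ 2 <= #|V| /\
    exists P : V -> {set {set V}},
      (forall v, partition (P v) (nbhd eR v)) /\
      isomorphic e (@sub_adj V eR P).

From mathcomp Require Import all_boot.
Set Implicit Arguments. Unset Strict Implicit. Unset Printing Implicit Defensive.

(* In G(P) the weak support vertices are exactly the vertices v of R, each carrying
   the single leaf (v,1). They lie pairwise at distance 3, and every vertex of G(P)
   is v or a neighbour of v for some v, so a 2-packing has at most one vertex per v.

   Conversely, suppose the weak supports W of T form a maximum 2-packing. One leaf
   per support vertex gives a 2-packing, so every support vertex is in W; and a
   vertex at distance at least 2 from W could be added to that set of leaves. Hence
   the closed neighbourhoods ("bags") of the vertices of W partition T. Contracting
   every bag yields a tree R on W, and T is R(P), where P(v) groups the neighbours of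
   v in R by the non-leaf neighbour of v through which their bags are reached. *)

Lemma dist_ge3P (T : finType) (e : rel T) u v :
  dist_ge3 e u v <-> [/\ u != v, ~~ e u v & forall m, ~~ (e u m && e m v)].
Proof.
split=> [H|[neq_uv nadj_uv no_mid]].
- split; first by apply/eqP=> E; have := H [::] isT E.
  + by apply/negP=> E; have := H [:: v]; rewrite /= E => /(_ isT erefl).
  + move=> m; apply/negP=> /andP[E1 E2].
    by have := H [:: m; v]; rewrite /= E1 E2 => /(_ isT erefl).
- case=> [|a [|b [|c p]]] //=.
  + by move=> _ E; rewrite E eqxx in neq_uv.
  + by rewrite andbT => E Ea; rewrite -Ea E in nadj_uv.
  + by rewrite andbT => /andP[E1 E2] Eb; have := no_mid a; rewrite -Eb E1 E2.
Qed.

Lemma dist_ge3_sym (T : finType) (e : rel T) u v :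
  symmetric e -> dist_ge3 e u v -> dist_ge3 e v u.
Proof.
move=> e_sym /dist_ge3P[neq_uv nadj_uv no_mid]; apply/dist_ge3P; split.
- by rewrite eq_sym.
- by rewrite e_sym.
- by move=> m; rewrite andbC (e_sym m u) (e_sym v m).
Qed.

Section Isomorphism.
Variables (T1 T2 : finType) (e1 : rel T1) (e2 : rel T2) (f : T1 -> T2).
Hypotheses (f_bij : bijective f) (f_adj : forall x y, e2 (f x) (f y) = e1 x y).

Let f_inj : injective f := bij_inj f_bij.

Lemma iso_set_pred (p1 : pred T1) (p2 : pred T2) :
  (forall x, p2 (f x) = p1 x) -> [set y | p2 y] = f @: [set x | p1 x].
Proof.
case: f_bij => g fK gK p12; apply/setP=> y; rewrite -(gK y) inE p12.
apply/idP/imsetP=> [p1y|[x]]; first by exists (g y); rewrite ?inE.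
by rewrite inE => p1x /f_inj ->.
Qed.

Lemma iso_leaf x : leaf e2 (f x) = leaf e1 x.
Proof.
by rewrite /leaf /nbhd (@iso_set_pred (e1 x)) ?card_imset // => y; rewrite f_adj.
Qed.

Lemma iso_weak_supports : weak_supports e2 = f @: weak_supports e1.
Proof.
apply: iso_set_pred => x; rewrite /weak_support (@iso_set_pred [pred y | e1 x y & leaf e1 y]).
  by rewrite card_imset.
by move=> y; rewrite /= f_adj iso_leaf.
Qed.

Lemma iso_dist_ge3 u v : dist_ge3 e2 (f u) (f v) <-> dist_ge3 e1 u v.
Proof.
case: f_bij => g fK gK.
split=> /dist_ge3P[neq_uv nadj_uv no_mid]; apply/dist_ge3P;
  rewrite (inj_eq f_inj) f_adj in neq_uv nadj_uv *; split=> // m.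
- by rewrite -!f_adj.
- by rewrite -(gK m) !f_adj.
Qed.

Lemma iso_two_packing (S : {set T1}) : two_packing e2 (f @: S) <-> two_packing e1 S.
Proof.
split=> pack_S.
- move=> u v Su Sv neq_uv; apply/iso_dist_ge3/pack_S; rewrite ?imset_f //.
  by rewrite (inj_eq f_inj).
- move=> _ _ /imsetP[u Su ->] /imsetP[v Sv ->]; rewrite (inj_eq f_inj) => neq_uv.
  exact/iso_dist_ge3/pack_S.
Qed.

Lemma iso_max_two_packing (S : {set T1}) : max_two_packing e2 (f @: S) -> max_two_packing e1 S.
Proof.
case=> /iso_two_packing pack_S max_S; split=> // S' /iso_two_packing/max_S.
by rewrite !card_imset.
Qed.

End Isomorphism.

Lemma connected_neighbor (T : finType) (e : rel T) :
  connected e -> 2 <= #|T| -> forall v, exists u, e v u.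
Proof.
move=> e_conn T_ge2 v.
have /card_gt0P[u] : 0 < #|[set~ v]| by rewrite cardsC1; case: #|T| T_ge2.
rewrite !inE => neq_uv.
case/connectP: (e_conn v u) => [[|a p]] /=; last by case/andP=> vEa _; exists a.
by move=> _ E; rewrite E eqxx in neq_uv.
Qed.

Lemma neq_neighbors_not_leaf (T : finType) (e : rel T) x y1 y2 :
  e x y1 -> e x y2 -> y1 != y2 -> ~~ leaf e x.
Proof.
move=> xEy1 xEy2 neq_y; rewrite /leaf neq_ltn orbC; apply/orP; left.
by apply/card_gt1P; exists y1, y2; rewrite !inE.
Qed.

Lemma not_leaf_neighbor (T : finType) (e : rel T) x a :
  ~~ leaf e x -> e x a -> exists2 z, e x z & z != a.
Proof.
move=> nleaf_x xEa; have : 1 < #|nbhd e x|.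
  have : 0 < #|nbhd e x| by apply/card_gt0P; exists a; rewrite inE.
  by move: nleaf_x; rewrite /leaf; case: #|nbhd e x| => [|[|n]].
case/card_gt1P=> [z1 [z2 [Nz1 Nz2 neq_z]]]; rewrite !inE in Nz1 Nz2.
have [E|] := eqVneq z1 a; last by exists z1.
by exists z2; rewrite // -E eq_sym.
Qed.

Section Subdivision.
Variables (V : finType) (eR : rel V) (P : V -> {set {set V}}).
Hypotheses (eR_sym : symmetric eR) (eR_neighbor : forall v, exists u, eR v u).
Hypothesis P_partition : forall v, partition (P v) (nbhd eR v).

Local Notation SV := (sub_vert P).
Local Notation sa := (sub_adj eR (P:=P)).

Definition sub_orig (v : V) : SV := exist _ (inl (inl v)) isT.
Definition sub_pendant (v : V) : SV := exist _ (inl (inr v)) isT.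
(* The default [sub_orig v] is only reached when [u] is not a neighbour of [v]. *)
Definition sub_block (v u : V) : SV := insubd (sub_orig v) (inr (v, pblock (P v) u)).

Definition is_orig (z : SV) : bool := if val z is inl (inl _) then true else false.
Definition is_pendant (z : SV) : bool := if val z is inl (inr _) then true else false.
Definition sub_base (z : SV) : V :=
  match val z with inl (inl v) | inl (inr v) | inr (v, _) => v end.

Lemma block_adj v A u : A \in P v -> u \in A -> eR v u.
Proof.
move=> PvA Au; case/and3P: (P_partition v) => /eqP cover_Pv _ _.
have : u \in cover (P v) by apply/bigcupP; exists A.
by rewrite cover_Pv inE.
Qed.

Lemma block_nonempty v A : A \in P v -> exists u, u \in A.
Proof.
move=> PvA; case/and3P: (P_partition v) => _ _ Pv0.
case: (set_0Vmem A) => [A0|[u Au]]; last by exists u.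
by rewrite -A0 PvA in Pv0.
Qed.

Lemma val_sub_block v u :
  eR v u -> u \in pblock (P v) u /\ val (sub_block v u) = inr (v, pblock (P v) u).
Proof.
move=> vEu; case/and3P: (P_partition v) => /eqP cover_Pv triv_Pv _.
have cover_u : u \in cover (P v) by rewrite cover_Pv inE.
by rewrite mem_pblock cover_u /sub_block insubdK //=; apply: pblock_mem.
Qed.

Lemma sub_adj_sym : symmetric sa.
Proof.
move=> x y; rewrite /sub_adj.
case: (val x) => [[v|v]|[v A]]; case: (val y) => [[w|w]|[w B]] //=; try by rewrite eq_sym.
by rewrite eR_sym [(v \in B) && _]andbC.
Qed.

Lemma sub_adj_orig v z :
  sa (sub_orig v) z = (z == sub_pendant v) || (if val z is inr (w, _) then v == w else false).
Proof.
case: z => [[[w|w]|[w A]] Hz]; rewrite /sub_adj /= ?orbF //.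
by apply/eqP/eqP=> [->|[->]] //; apply: val_inj.
Qed.

Lemma sub_base_adj z : z = sub_orig (sub_base z) \/ sa (sub_orig (sub_base z)) z.
Proof.
case: z => [[[v|v]|[v A]] Hz]; rewrite /sub_base /=; last 2 first.
- by right; rewrite /sub_adj /=.
- by right; rewrite /sub_adj /=.
by left; apply: val_inj.
Qed.

Lemma sub_leafE z : leaf sa z = is_pendant z.
Proof.
case: z => [[[v|v]|[v A]] Hz]; rewrite [is_pendant _]/=.
- apply/negbTE; have [u vEu] := eR_neighbor v; have [_ val_vu] := val_sub_block vEu.
  apply: (@neq_neighbors_not_leaf _ _ _ (sub_pendant v) (sub_block v u)).
  + by rewrite /sub_adj /=.
  + by rewrite /sub_adj val_vu /=.
  + by apply/eqP=> /(congr1 val); rewrite val_vu.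
- apply/cards1P; exists (sub_orig v); apply/setP=> z; rewrite !inE.
  case: z => [[[w|w]|[w B]] Hw]; rewrite /sub_adj //=.
  by apply/eqP/eqP=> [->|[->]] //; apply: val_inj.
- apply/negbTE; have [u Au] := block_nonempty Hz; have vEu := block_adj Hz Au.
  have uEv : eR u v by rewrite eR_sym.
  have [v_blk val_uv] := val_sub_block uEv.
  apply: (@neq_neighbors_not_leaf _ _ _ (sub_orig v) (sub_block u v)).
  + by rewrite /sub_adj /=.
  + by rewrite /sub_adj val_uv /= vEu Au v_blk.
  + by apply/eqP=> /(congr1 val); rewrite val_uv.
Qed.

Lemma sub_weak_support z : weak_support sa z = is_orig z.
Proof.
rewrite /weak_support.
case: z => [[[v|v]|[v A]] Hz]; rewrite [is_orig _]/=.
- apply/cards1P; exists (sub_pendant v); apply/setP=> z; rewrite !inE sub_leafE.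
  by case: z => [[[w|w]|[w B]] Hw]; rewrite /sub_adj -val_eqE //= ?andbF ?andbT eq_sym.
- apply/negbTE/negP; case/cards1P=> y /setP/(_ y); rewrite !inE eqxx sub_leafE.
  by case: y => [[[w|w]|[w B]] Hw]; rewrite /sub_adj //= andbF.
- apply/negbTE/negP; case/cards1P=> y /setP/(_ y); rewrite !inE eqxx sub_leafE.
  by case: y => [[[w|w]|[w B]] Hw]; rewrite /sub_adj //= andbF.
Qed.

Lemma is_origP z : is_orig z -> z = sub_orig (sub_base z).
Proof. by case: z => [[[v|v]|[v A]] Hz] //= _; apply: val_inj. Qed.

Lemma sub_orig_two_packing : two_packing sa [set z | is_orig z].
Proof.
move=> z1 z2; rewrite !inE => /is_origP -> /is_origP ->.
set u := sub_base z1; set v := sub_base z2 => neq_uv.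
apply/dist_ge3P; split=> // m; rewrite sub_adj_orig.
apply/negP=> /andP[+]; rewrite sub_adj_sym sub_adj_orig.
case/orP=> [/eqP -> /=|].
  by rewrite orbF => /eqP/(congr1 val)[u_v]; rewrite u_v eqxx in neq_uv.
case: m => [[[w|w]|[w B]] Hw] //= /eqP <- /eqP v_u.
by rewrite v_u eqxx in neq_uv.
Qed.

Lemma card_sub_two_packing (S : {set SV}) : two_packing sa S -> #|S| <= #|V|.
Proof.
move=> pack_S; rewrite -(@card_in_imset _ _ sub_base S) ?max_card //.
move=> z1 z2 Sz1 Sz2 base_eq; apply/eqP; apply: contraT => neq_z.
have /dist_ge3P[_ nadj no_mid] := pack_S _ _ Sz1 Sz2 neq_z.
have := sub_base_adj z2; rewrite -base_eq.
case: (sub_base_adj z1) => E1 [] E2.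
- by rewrite {1}E1 {1}E2 eqxx in neq_z.
- by rewrite {1}E1 E2 in nadj.
- by rewrite {1}E2 sub_adj_sym E1 in nadj.
- by have := no_mid (sub_orig (sub_base z1)); rewrite sub_adj_sym E1 E2.
Qed.

Lemma card_sub_orig : #|[set z | is_orig z]| = #|V|.
Proof.
have orig_inj : injective sub_orig by move=> u v /(congr1 val)[].
rewrite -cardsT -(card_imset _ orig_inj); apply: eq_card => z; rewrite inE.
by apply/idP/imsetP=> [/is_origP ->|[v _ ->]] //; exists (sub_base z).
Qed.

Lemma sub_max_two_packing : max_two_packing sa (weak_supports sa).
Proof.
have -> : weak_supports sa = [set z | is_orig z].
  by apply/setP=> z; rewrite !inE sub_weak_support.
split; first exact: sub_orig_two_packing.
by move=> S /card_sub_two_packing; rewrite card_sub_orig.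
Qed.

End Subdivision.

Lemma Oprime_max_two_packing (T : finType) (e : rel T) :
  in_Oprime e -> max_two_packing e (weak_supports e).
Proof.
case=> V [eR [[[eR_sym _] [eR_conn _]] [V_ge2 [P [P_part [f [f_bij f_adj]]]]]]].
apply: (iso_max_two_packing f_bij f_adj); rewrite -(iso_weak_supports f_bij f_adj).
exact/sub_max_two_packing/P_part/(connected_neighbor eR_conn V_ge2).
Qed.

Definition support (T : finType) (e : rel T) (l : T) : T := odflt l [pick y | e l y].
Definition is_support (T : finType) (e : rel T) (s : T) : bool := [exists l, e s l && leaf e l].
Definition pick_leaf (T : finType) (e : rel T) (s : T) : T :=
  odflt s [pick l | e s l && leaf e l].

Section Leaves.
Variables (T : finType) (e : rel T).

Lemma leaf_supportP l : leaf e l -> e l (support e l) /\ forall y, e l y -> y = support e l.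
Proof.
case/cards1P=> s /setP nbhd_l.
have lE y : e l y = (y == s) by have := nbhd_l y; rewrite !inE.
rewrite /support; case: pickP => [y|]; last by move/(_ s); rewrite lE eqxx.
move=> ly; split=> // y'; rewrite !lE in ly *; by rewrite (eqP ly) => /eqP.
Qed.

Lemma pick_leafP s : is_support e s -> e s (pick_leaf e s) && leaf e (pick_leaf e s).
Proof.
case/existsP=> l sl; rewrite /pick_leaf; case: pickP => [//|].
by move/(_ l); rewrite sl.
Qed.

Lemma weak_support_is_support w : weak_support e w -> is_support e w.
Proof. by case/cards1P=> l /setP/(_ l); rewrite !inE eqxx => sl; apply/existsP; exists l. Qed.

Lemma weak_support_leaf_uniq w a b :
  weak_support e w -> e w a -> leaf e a -> e w b -> leaf e b -> a = b.
Proof.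
case/cards1P=> l /setP wl wa la wb lb.
by have := wl a; have := wl b; rewrite !inE wa la wb lb => /esym/eqP -> /esym/eqP.
Qed.

Hypotheses (e_sym : symmetric e) (e_conn : connected e) (T_gt2 : 2 < #|T|).

Lemma support_pick_leaf s : is_support e s -> support e (pick_leaf e s) = s.
Proof.
move/pick_leafP/andP=> [sl ll]; have [_ uniq_l] := leaf_supportP ll.
by rewrite -(uniq_l s) // e_sym.
Qed.

(* Two adjacent leaves form a whole connected component of order 2. *)
Lemma support_not_leaf l : leaf e l -> ~~ leaf e (support e l).
Proof.
move=> ll; apply/negP=> ls; set s := support e l in ls.
have [ls_adj uniq_l] := leaf_supportP ll; have [sl_adj uniq_s] := leaf_supportP ls.
have l_ss : l = support e s by apply: uniq_s; rewrite e_sym.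
have closed p x : x \in [set l; s] -> path e x p -> last x p \in [set l; s].
  elim: p x => [|a p IHp] x //= x_ls /andP[xa]; apply: IHp.
  case/set2P: x_ls xa => ->; first by move/uniq_l ->; rewrite !inE eqxx orbT.
  by move/uniq_s ->; rewrite -l_ss !inE eqxx.
have : #|T| <= #|[set l; s]|.
  rewrite -cardsT; apply/subset_leq_card/subsetP=> y _.
  by case/connectP: (e_conn l y) => p p_path ->; apply: closed p_path; rewrite !inE eqxx.
by rewrite cards2 leqNgt (leq_ltn_trans _ T_gt2) //; case: (_ != _).
Qed.

Lemma leaves_two_packing (L : {set T}) :
  (forall l, l \in L -> leaf e l) -> {in L &, injective (support e)} -> two_packing e L.
Proof.
move=> L_leaf supp_inj l1 l2 Ll1 Ll2 neq_l; apply/dist_ge3P.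
have [_ uniq1] := leaf_supportP (L_leaf _ Ll1); have [_ uniq2] := leaf_supportP (L_leaf _ Ll2).
split=> // [|m].
- apply/negP=> l12; have := support_not_leaf (L_leaf _ Ll1).
  by rewrite -(uniq1 _ l12) L_leaf.
- apply/negP=> /andP[l1m ml2]; move/eqP: neq_l; apply; apply: supp_inj => //.
  by rewrite -(uniq1 _ l1m) -(uniq2 m) // e_sym.
Qed.

Lemma pick_leaves_two_packing (S : {set T}) :
  {subset S <= is_support e} ->
  two_packing e (pick_leaf e @: S) /\ #|pick_leaf e @: S| = #|S|.
Proof.
move=> S_supp; have pick_inj : {in S &, injective (pick_leaf e)}.
  move=> s1 s2 /S_supp s1_supp /S_supp s2_supp E.
  by rewrite -(support_pick_leaf s1_supp) E support_pick_leaf.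
split; last exact: card_in_imset.
apply: leaves_two_packing => [_ /imsetP[s /S_supp /pick_leafP/andP[_ ?] ->] //|].
move=> _ _ /imsetP[s1 /S_supp s1_supp ->] /imsetP[s2 /S_supp s2_supp ->].
by rewrite !support_pick_leaf // => ->.
Qed.

End Leaves.

Definition dominates (T : finType) (e : rel T) (w x : T) : bool := (w == x) || e w x.

Section Maximality.
Variables (T : finType) (e : rel T).
Hypotheses (e_sym : symmetric e) (e_conn : connected e) (T_gt2 : 2 < #|T|).
Hypothesis W_max : max_two_packing e (weak_supports e).

Local Notation W := (weak_supports e).

Let W_supp w : w \in W -> is_support e w.
Proof. by rewrite inE; apply: weak_support_is_support. Qed.

(* One leaf per support vertex is a 2-packing, as large as the set of supports. *)
Lemma is_support_weak s : is_support e s -> s \in W.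
Proof.
set S := [set s | is_support e s].
have S_supp : {subset S <= is_support e} by move=> s0; rewrite inE.
have [S_pack S_card] := pick_leaves_two_packing e_sym e_conn T_gt2 S_supp.
have W_sub_S : W \subset S by apply/subsetP=> w /W_supp; rewrite inE.
have /eqP -> : W == S by rewrite eqEcard W_sub_S -S_card (proj2 W_max).
by rewrite inE.
Qed.

Lemma leaf_neighbor_weak l y : leaf e l -> e l y -> y \in W.
Proof.
move=> ll ly; have [ls uniq_l] := leaf_supportP ll; rewrite (uniq_l _ ly).
by apply/is_support_weak/existsP; exists l; rewrite e_sym ls.
Qed.

Lemma weak_supports_dominate x : exists2 w, w \in W & dominates e w x.
Proof.
have [/exists_inP[w Ww wx]|] := boolP [exists w in W, dominates e w x]; first by exists w.
rewrite negb_exists_in => /forall_inP undom; exfalso.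
have [L_pack L_card] := pick_leaves_two_packing e_sym e_conn T_gt2 W_supp.
have far l : l \in pick_leaf e @: W -> dist_ge3 e x l.
  case/imsetP=> w Ww ->; have w_supp := W_supp Ww.
  have /andP[wl ll] := pick_leafP w_supp; have [_ uniq_l] := leaf_supportP ll.
  have := undom w Ww; rewrite /dominates negb_or => /andP[neq_wx nadj_wx].
  apply/dist_ge3P; split.
  - by apply: contraNneq nadj_wx => ->.
  - apply: contraNN neq_wx => xl.
    by rewrite -{1}(support_pick_leaf e_sym w_supp) -(uniq_l x) // e_sym.
  - move=> m; apply/negP=> /andP[xm ml]; move/negP: nadj_wx; apply.
    by rewrite -{1}(support_pick_leaf e_sym w_supp) -(uniq_l m) // e_sym.
have x_notin : x \notin pick_leaf e @: W by apply/negP=> /far/dist_ge3P[]; rewrite eqxx.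
have : #|x |: pick_leaf e @: W| <= #|W|.
  apply: (proj2 W_max) => u v; rewrite !in_setU1.
  case/orP=> [/eqP->|Lu] /orP[/eqP->|Lv] neq_uv; first by rewrite eqxx in neq_uv.
  - exact: far.
  - exact/(dist_ge3_sym e_sym)/far.
  - exact: L_pack.
by rewrite cardsU1 x_notin L_card ltnn.
Qed.

End Maximality.

Section AcyclicGraphs.
Variables (T : finType) (e : rel T).
Hypotheses (e_irr : irreflexive e) (e_acyc : acyclic e).

Lemma adj_neq x y : e x y -> x != y.
Proof. by apply: contraTneq => ->; rewrite e_irr. Qed.

Lemma acyclic_no_triangle a b c : e a b -> e b c -> e c a -> False.
Proof.
move=> ab bc ca; have abc : path e a [:: b; c] by rewrite /= ab bc.
have := e_acyc abc; rewrite /= !inE !negb_or (adj_neq ab) (adj_neq bc) eq_sym (adj_neq ca) ca.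
by move/(_ isT isT).
Qed.

Lemma acyclic_no_square a b c d :
  e a b -> e b c -> e c d -> e d a -> a != c -> b != d -> False.
Proof.
move=> ab bc cd da ac bd; have abcd : path e a [:: b; c; d] by rewrite /= ab bc cd.
have := e_acyc abcd; rewrite /= !inE !negb_or (adj_neq ab) ac eq_sym (adj_neq da).
by rewrite (adj_neq bc) bd (adj_neq cd) da; move/(_ isT isT).
Qed.

End AcyclicGraphs.

Section Contraction.
Variables (T : finType) (e : rel T).
Hypotheses (e_sym : symmetric e) (e_irr : irreflexive e) (e_acyc : acyclic e).
Hypothesis e_conn : connected e.

Local Notation W := (weak_supports e).

Hypothesis W_pack : two_packing e W.
Hypothesis W_dom : forall x, exists2 w, w \in W & dominates e w x.
Hypothesis W_leaf_nbr : forall l y, leaf e l -> e l y -> y \in W.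

Lemma dominates_W_inj u v x : u \in W -> v \in W -> dominates e u x -> dominates e v x -> u = v.
Proof.
move=> Wu Wv ux vx; apply/eqP; apply: contraT => neq_uv.
have /dist_ge3P[_ nadj_uv no_mid] := W_pack Wu Wv neq_uv.
move: ux vx; rewrite /dominates => /orP[/eqP<-|ux] /orP[/eqP|vx].
- by move=> vu; rewrite vu eqxx in neq_uv.
- by rewrite e_sym vx in nadj_uv.
- by move=> vx; rewrite vx ux in nadj_uv.
- by have := no_mid x; rewrite ux e_sym vx.
Qed.

Lemma W_adj_notin u y : u \in W -> e u y -> y \notin W.
Proof.
move=> Wu uy; apply/negP=> Wy.
have uEy : u = y by apply: (dominates_W_inj (x := y)); rewrite // /dominates ?eqxx ?uy ?orbT.
by rewrite uEy e_irr in uy.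
Qed.

Lemma dominates_W_neq u v a b : u \in W -> v \in W -> u != v ->
  dominates e u a -> dominates e v b -> a != b.
Proof.
move=> Wu Wv neq_uv ua vb; apply: contraNneq neq_uv => ab.
by apply/eqP/(dominates_W_inj (x := a)); rewrite // ab.
Qed.

(* Two closed neighbourhoods of vertices of W are joined by at most one edge: two
   edges would close a cycle of length 4 or 6 through both centres. *)
Lemma bag_edge_unique v u x x' y y' : v \in W -> u \in W ->
  e v x -> e v x' -> e u y -> e u y' -> e x y -> e x' y' -> x = x' /\ y = y'.
Proof.
move=> Wv Wu vx vx' uy uy' xy x'y'.
have neq_vu : v != u.
  apply: contraTneq xy => vu; apply/negP=> xy.
  by apply: (acyclic_no_triangle e_irr e_acyc vx xy); rewrite e_sym vu.
have dom_v a : a \in [:: v; x; x'] -> dominates e v a.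
  by rewrite !inE /dominates => /or3P[]/eqP->; rewrite ?eqxx ?vx ?vx' ?orbT.
have dom_u b : b \in [:: u; y; y'] -> dominates e u b.
  by rewrite !inE /dominates => /or3P[]/eqP->; rewrite ?eqxx ?uy ?uy' ?orbT.
have dom_neq a b : a \in [:: v; x; x'] -> b \in [:: u; y; y'] -> a != b.
  by move=> /dom_v va /dom_u ub; apply: dominates_W_neq Wv Wu neq_vu va ub.
have [xx'|neq_x] := eqVneq x x'; have [yy'|neq_y] := eqVneq y y'; first by [].
- subst x'; exfalso.
  apply: (acyclic_no_square e_irr e_acyc xy _ uy' _ (dom_neq x u _ _) neq_y);
    by rewrite ?inE ?eqxx ?orbT // e_sym.
- subst y'; exfalso.
  have neq_yv : y != v by rewrite eq_sym dom_neq // !inE eqxx ?orbT.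
  apply: (acyclic_no_square e_irr e_acyc _ _ vx' _ neq_yv neq_x); by rewrite // e_sym.
exfalso.
have cyc : path e v [:: x; y; u; y'; x'] by rewrite /= vx xy e_sym uy uy' e_sym x'y'.
have cyc_uniq : uniq [:: v; x; y; u; y'; x'].
  rewrite /= !inE !negb_or; repeat (apply/andP; split) => //;
    by [ apply: dom_neq; rewrite !inE eqxx ?orbT
       | rewrite eq_sym; apply: dom_neq; rewrite !inE eqxx ?orbT
       | apply: (adj_neq e_irr) | rewrite eq_sym; apply: (adj_neq e_irr) ].
by have := e_acyc cyc cyc_uniq isT; rewrite /= e_sym vx'.
Qed.

Definition owner (x : T) : T := odflt x [pick w in W | dominates e w x].

Lemma ownerP x : owner x \in W /\ dominates e (owner x) x.
Proof.
rewrite /owner; case: pickP => [w /andP[] //|none].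
by have [w Ww wx] := W_dom x; have := none w; rewrite Ww wx.
Qed.

Lemma owner_in x : owner x \in W. Proof. by case: (ownerP x). Qed.

Lemma owner_eq w x : w \in W -> dominates e w x -> owner x = w.
Proof. by case: (ownerP x) => Wo ox Ww wx; apply: dominates_W_inj ox wx. Qed.

Lemma owner_W w : w \in W -> owner w = w.
Proof. by move=> Ww; apply: owner_eq; rewrite // /dominates eqxx. Qed.

Lemma owner_adj_in w x : w \in W -> e w x -> owner x = w.
Proof. by move=> Ww wx; apply: owner_eq; rewrite // /dominates wx orbT. Qed.

Lemma owner_adj x : x \notin W -> e (owner x) x.
Proof.
case: (ownerP x) => Wo /orP[/eqP ox|//] Wx.
by rewrite -ox Wo in Wx.
Qed.

Lemma owner_adj_eq x w : x \notin W -> w \in W -> (owner x == w) = e x w.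
Proof.
move=> Wx Ww; apply/eqP/idP=> [<-|xw]; first by rewrite e_sym owner_adj.
by apply: owner_adj_in; rewrite // e_sym.
Qed.

(* The tree R: its vertices are the bags, adjacent when joined by an edge of T. A
   vertex x of T outside W is sent to the pendant vertex (owner x, 1) of G(P) if it
   is a leaf, and otherwise to the block (owner x, facing x), where facing x is the
   set of bags entered by the edges at x that leave the bag of x. *)
Definition cvert : finType := {w : T | w \in W}.
Definition cowner (x : T) : cvert := exist _ (owner x) (owner_in x).

Lemma cownerK (v : cvert) : cowner (val v) = v.
Proof. by apply: val_inj; rewrite /= owner_W // (valP v). Qed.

Definition cadj (u v : cvert) : bool :=
  [exists x, exists y, [&& e (val u) x, e x y & e y (val v)]].

Definition facing (x : T) : {set cvert} := [set u | [exists y, e x y && e (val u) y]].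

Definition cparts (v : cvert) : {set {set cvert}} :=
  facing @: [set x | e (val v) x && ~~ leaf e x].

Lemma cadjP u v : reflect (exists x y, [/\ e (val u) x, e x y & e y (val v)]) (cadj u v).
Proof.
apply: (iffP existsP) => [[x /existsP[y /and3P[ux xy yv]]]|[x [y [ux xy yv]]]].
  by exists x, y.
by exists x; apply/existsP; exists y; rewrite ux xy yv.
Qed.

Lemma facingP x u : reflect (exists2 y, e x y & e (val u) y) (u \in facing x).
Proof.
rewrite inE; apply: (iffP existsP) => [[y /andP[]]|[y xy uy]]; first by exists y.
by exists y; rewrite xy uy.
Qed.

Lemma cadj_sym : symmetric cadj.
Proof.
apply: symmetric_from_pre => u v /cadjP[x [y [ux xy yv]]].
by apply/cadjP; exists y, x; split; rewrite e_sym.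
Qed.

Lemma cadj_irr : irreflexive cadj.
Proof.
move=> u; apply/negbTE/negP=> /cadjP[x [y [ux xy yu]]].
exact: (acyclic_no_triangle e_irr e_acyc ux xy yu).
Qed.

Lemma facing_inj v x y u :
  v \in W -> e v x -> e v y -> u \in facing x -> u \in facing y -> x = y.
Proof.
move=> Wv vx vy /facingP[x1 xx1 ux1] /facingP[y1 yy1 uy1].
by case: (bag_edge_unique Wv (valP u) vx vy ux1 uy1 xx1 yy1).
Qed.

Lemma facing_nonempty x : x \notin W -> ~~ leaf e x -> exists u, u \in facing x.
Proof.
move=> Wx nleaf_x; have xo : e x (owner x) by rewrite e_sym owner_adj.
have [z xz neq_zo] := not_leaf_neighbor nleaf_x xo.
have Wz : z \notin W.
  by apply: contra neq_zo => Wz; apply/eqP/esym/owner_adj_in; rewrite // e_sym.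
by exists (cowner z); apply/facingP; exists z; rewrite //= owner_adj.
Qed.

Lemma facing_adj x y : x \notin W -> y \notin W ->
  [&& cadj (cowner x) (cowner y), cowner y \in facing x & cowner x \in facing y] = e x y.
Proof.
move=> Wx Wy; have [ox oy] := (owner_adj Wx, owner_adj Wy).
apply/idP/idP=> [/and3P[_ /facingP[y1 xy1 oy1] /facingP[x1 yx1 ox1]]|xy].
  have x1y : e x1 y by rewrite e_sym.
  by have [_ <-] := bag_edge_unique (owner_in x) (owner_in y) ox ox1 oy1 oy xy1 x1y.
apply/and3P; split.
- by apply/cadjP; exists x, y; rewrite /= ox xy e_sym oy.
- by apply/facingP; exists y.
- by apply/facingP; exists x; rewrite // e_sym.
Qed.

Definition to_sub_raw (x : T) : sub_raw cvert :=
  if x \in W then inl (inl (cowner x))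
  else if leaf e x then inl (inr (cowner x)) else inr (cowner x, facing x).

Lemma to_sub_valid x : sub_valid cparts (to_sub_raw x).
Proof.
rewrite /to_sub_raw; case: ifPn => // Wx; case: ifPn => // nleaf_x /=.
by apply: imset_f; rewrite inE owner_adj.
Qed.

Definition to_sub (x : T) : sub_vert cparts := exist _ (to_sub_raw x) (to_sub_valid x).

Lemma cowner_eq x y : (cowner x == cowner y) = (owner x == owner y).
Proof. by rewrite -val_eqE. Qed.

Lemma to_sub_adj x y : sub_adj cadj (to_sub x) (to_sub y) = e x y.
Proof.
rewrite /sub_adj /= /to_sub_raw.
have [Wx|Wx] := boolP (x \in W); have [Wy|Wy] := boolP (y \in W).
- by apply/esym/negbTE/negP=> /(W_adj_notin Wx); rewrite Wy.
- by case: ifP => _; rewrite /= cowner_eq (owner_W Wx) ?[x == _]eq_sym owner_adj_eq // e_sym.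
- by case: ifP => _; rewrite /= cowner_eq (owner_W Wy) ?[y == _]eq_sym owner_adj_eq.
case: ifP => lx; case: ifP => ly //=; last exact: facing_adj.
- by apply/esym/negbTE; apply: contra Wy; apply: W_leaf_nbr lx.
- by apply/esym/negbTE; apply: contra Wy; apply: W_leaf_nbr lx.
- by apply/esym/negbTE; apply: contra Wx; rewrite e_sym; apply: W_leaf_nbr ly.
Qed.

Lemma to_sub_inj : injective to_sub.
Proof.
move=> x y /(congr1 val); rewrite /= /to_sub_raw.
have [Wx|Wx] := boolP (x \in W); have [Wy|Wy] := boolP (y \in W).
- by case; rewrite (owner_W Wx) (owner_W Wy).
- by case: ifP.
- by case: ifP.
case: ifP => lx; case: ifP => ly // [oxy].
- have Wo := owner_in x; rewrite inE in Wo.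
  apply: (weak_support_leaf_uniq Wo (owner_adj Wx) lx); rewrite // oxy owner_adj //.
- move=> fxy; have [u fx_u] := facing_nonempty Wx (negbT lx).
  apply: (facing_inj (owner_in x) (owner_adj Wx) _ fx_u); first by rewrite oxy owner_adj.
  by rewrite -fxy.
Qed.

Lemma to_sub_surj (z : sub_vert cparts) : exists x, to_sub x = z.
Proof.
case: z => [[[v|v]|[v A]] valid_z].
- by exists (val v); apply: val_inj; rewrite /= /to_sub_raw (valP v) cownerK.
- have := valP v; rewrite inE => /cards1P[l /setP/(_ l)]; rewrite !inE eqxx => /andP[vl ll].
  exists l; apply: val_inj; rewrite /= /to_sub_raw (negbTE (W_adj_notin (valP v) vl)) ll.
  by congr (inl (inr _)); apply: val_inj; rewrite /= (owner_adj_in (valP v) vl).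
- have /imsetP[x] : A \in cparts v := valid_z; rewrite inE => /andP[vx nleaf_x] A_x.
  exists x; apply: val_inj; rewrite /= /to_sub_raw (negbTE (W_adj_notin (valP v) vx)).
  rewrite (negbTE nleaf_x) A_x; congr (inr (_, _)).
  by apply: val_inj; rewrite /= (owner_adj_in (valP v) vx).
Qed.

Lemma to_sub_bij : bijective to_sub.
Proof.
apply: (inj_card_bij to_sub_inj); rewrite -[X in _ <= X]cardsT -(card_imset _ to_sub_inj).
by apply/subset_leq_card/subsetP=> z _; have [x <-] := to_sub_surj z; apply: imset_f.
Qed.

Lemma cparts_partition v : partition (cparts v) (nbhd cadj v).
Proof.
have Wv := valP v; apply/and3P; split.
- apply/eqP/setP=> u; rewrite inE; apply/bigcupP/cadjP.
    case=> _ /imsetP[x vx ->] /facingP[y xy uy]; rewrite inE in vx.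
    by exists x, y; rewrite (e_sym y) (andP vx).1.
  case=> x [y [vx xy yu]]; exists (facing x); last by apply/facingP; exists y; rewrite // e_sym.
  apply: imset_f; rewrite inE vx; apply: contraL (valP u) => lx.
  exact: W_adj_notin (W_leaf_nbr lx xy) yu.
- apply/trivIsetP=> _ _ /imsetP[x vx ->] /imsetP[y vy ->] neq_f.
  rewrite !inE in vx vy; case/andP: vx => vx _; case/andP: vy => vy _.
  rewrite -setI_eq0; apply/set0Pn=> -[u]; rewrite inE => /andP[fx fy].
  by move: neq_f; rewrite (facing_inj Wv vx vy fx fy) eqxx.
- apply/imsetP=> -[x]; rewrite inE => /andP[vx nleaf_x] f0.
  have [u] := facing_nonempty (W_adj_notin Wv vx) nleaf_x.
  by rewrite -f0 inE.
Qed.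

Lemma cadj_connected : connected cadj.
Proof.
have step x y : e x y -> connect cadj (cowner x) (cowner y).
  move=> xy; have [oxy|neq_o] := eqVneq (owner x) (owner y).
    by rewrite (_ : cowner x = cowner y) //; apply: val_inj.
  have Wx : x \notin W by apply: contra neq_o => Wx; rewrite (owner_W Wx) (owner_adj_in Wx xy).
  have Wy : y \notin W.
    by apply: contra neq_o => Wy; rewrite (owner_W Wy) (owner_adj_in Wy) // e_sym.
  by apply/connect1/cadjP; exists x, y; rewrite /= owner_adj // xy e_sym owner_adj.
move=> u v; rewrite -(cownerK u) -(cownerK v).
case/connectP: (e_conn (val u) (val v)) => p + ->.
elim: p (val u) => [|y p IHp] x /=; first by rewrite connect0.
by case/andP=> xy p_path; apply: connect_trans (step _ _ xy) (IHp _ p_path).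
Qed.

(* With at most one vertex in W, every other vertex is a leaf hanging from it, so
   the unique vertex of W is not a weak support once #|T| > 2. *)
Lemma two_le_card_cvert : 2 < #|T| -> 1 < #|cvert|.
Proof.
move=> T_gt2; have [x0 _] : exists x0 : T, x0 \in T by apply/card_gt0P; case: #|T| T_gt2.
rewrite card_sig; apply: contraTT T_gt2; rewrite -!leqNgt => W_le1.
set w := owner x0; have Ww : w \in W := owner_in x0.
have W_w v : v \in W -> v = w by move=> Wv; apply: (card_le1_eqP W_le1).
have w_adj z : z != w -> e w z.
  move=> neq_zw; have Wz : z \notin W by apply: contra neq_zw => /W_w ->.
  by rewrite -(W_w _ (owner_in z)) owner_adj.
have leaf_z z : z != w -> leaf e z.
  move=> neq_zw; apply/cards1P; exists w; apply/setP=> y; rewrite !inE.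
  apply/idP/eqP=> [zy|->]; last by rewrite e_sym w_adj.
  apply/eqP; apply: contraT => neq_yw.
  by case: (acyclic_no_triangle e_irr e_acyc (w_adj _ neq_zw) zy); rewrite e_sym w_adj.
have : [set~ w] \subset [set y | e w y & leaf e y].
  by apply/subsetP=> z; rewrite !inE => neq_zw; rewrite w_adj ?leaf_z.
move/subset_leq_card; rewrite cardsC1; move: Ww; rewrite inE => /eqP ->.
by case: #|T|.
Qed.

Lemma dominates_cvert_inj (u v : cvert) z :
  dominates e (val u) z -> dominates e (val v) z -> u = v.
Proof. by move=> uz vz; apply/val_inj/(dominates_W_inj (valP u) (valP v) uz vz). Qed.

Definition bridge (a b : cvert) : T * T :=
  odflt (val a, val b) [pick xy | [&& e (val a) xy.1, e xy.1 xy.2 & e xy.2 (val b)]].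

Lemma bridgeP a b : cadj a b ->
  [/\ e (val a) (bridge a b).1, e (bridge a b).1 (bridge a b).2 & e (bridge a b).2 (val b)].
Proof.
rewrite /bridge; case: pickP => [[x y] /and3P[] //|none].
by case/cadjP=> x [y [ax xy yb]]; have := none (x, y); rewrite /= ax xy yb.
Qed.

Definition detour (a : cvert) (i x : T) : seq T := if i == x then [::] else [:: val a; x].

Section Detour.
Variables (a : cvert) (i x : T).
Hypotheses (ai : e (val a) i) (ax : e (val a) x).

Lemma detour_path : path e i (detour a i x).
Proof. by rewrite /detour; case: ifP => //= _; rewrite e_sym ai ax. Qed.

Lemma last_detour : last i (detour a i x) = x.
Proof. by rewrite /detour; case: ifP => [/eqP|]. Qed.

Lemma detour_dominated z : z \in detour a i x -> dominates e (val a) z.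
Proof.
rewrite /dominates /detour; case: ifP => // _.
by rewrite !inE => /orP[]/eqP->; rewrite ?eqxx ?ax ?orbT.
Qed.

Lemma detour_head_dominated z : z \in i :: detour a i x -> dominates e (val a) z.
Proof.
rewrite in_cons => /orP[/eqP->|]; first by rewrite /dominates ai orbT.
exact: detour_dominated.
Qed.

Lemma detour_uniq : uniq (i :: detour a i x).
Proof.
rewrite /detour; case: ifPn => //= neq_ix.
by rewrite !inE negb_or neq_ix eq_sym (adj_neq e_irr ai) (adj_neq e_irr ax).
Qed.

End Detour.

(* [i :: lift a i q] is a walk of [e] that enters the bag of [a] at [i] and then
   visits the bags of [q] in turn. *)
Fixpoint lift (a : cvert) (i : T) (q : seq cvert) : seq T :=
  if q is b :: q' then detour a i (bridge a b).1 ++ (bridge a b).2 :: lift b (bridge a b).2 q'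
  else [::].

Lemma lift_path a i q : path cadj a q -> e (val a) i -> path e i (lift a i q).
Proof.
elim: q a i => [|b q IHq] a i //= /andP[ab q_path] ai.
have [ax xy yb] := bridgeP ab; rewrite cat_path detour_path //= last_detour xy /=.
by apply: IHq; rewrite // e_sym.
Qed.

Lemma lift_last_adj a i q : path cadj a q -> e (val a) i ->
  e (val (last a q)) (last i (lift a i q)).
Proof.
elim: q a i => [|b q IHq] a i //= /andP[ab q_path] ai.
have [_ _ yb] := bridgeP ab; rewrite last_cat /=.
by apply: IHq; rewrite // e_sym.
Qed.

Lemma lift_dominated a i q z : path cadj a q -> e (val a) i -> z \in i :: lift a i q ->
  exists2 v, v \in a :: q & dominates e (val v) z.
Proof.
elim: q a i => [|b q IHq] a i /=.
  by move=> _ ai; rewrite inE => /eqP->; exists a; rewrite ?mem_head // /dominates ai orbT.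
move=> /andP[ab q_path] ai; have [ax _ yb] := bridgeP ab.
rewrite -cat_cons mem_cat => /orP[z_det|z_lift].
  by exists a; rewrite ?mem_head // (detour_head_dominated ai ax z_det).
have by_ : e (val b) (bridge a b).2 by rewrite e_sym.
by have [v qv vz] := IHq _ _ q_path by_ z_lift; exists v; rewrite // inE qv orbT.
Qed.

Lemma lift_size a i q : size q <= size (lift a i q).
Proof.
elim: q a i => [|b q IHq] a i //=.
by rewrite size_cat /= addnS ltnS (leq_trans (IHq b (bridge a b).2)) // leq_addl.
Qed.

Lemma lift_uniq a i q : path cadj a q -> uniq (a :: q) -> e (val a) i -> uniq (i :: lift a i q).
Proof.
elim: q a i => [|b q IHq] a i // /andP[ab q_path] /andP[a_q q_uniq] ai.
have [ax _ yb] := bridgeP ab; have by_ : e (val b) (bridge a b).2 by rewrite e_sym.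
rewrite [lift _ _ _]/= -cat_cons cat_uniq detour_uniq // IHq // andbT.
apply/hasPn=> z z_lift.
apply/negP=> /(detour_head_dominated ai ax) az.
have [v qv vz] := lift_dominated q_path by_ z_lift.
by move: a_q; rewrite (dominates_cvert_inj az vz) qv.
Qed.

Lemma lift_last_dominated a i q z : path cadj a q -> uniq (a :: q) -> e (val a) i ->
  z \in i :: lift a i q -> dominates e (val (last a q)) z -> z = last i (lift a i q).
Proof.
elim: q a i => [|b q IHq] a i /=; first by move=> _ _ _; rewrite inE => /eqP.
move=> /andP[ab q_path] /andP[a_q q_uniq] ai; have [ax _ yb] := bridgeP ab.
have by_ : e (val b) (bridge a b).2 by rewrite e_sym.
rewrite -cat_cons mem_cat last_cat /= => /orP[/(detour_head_dominated ai ax) az lz|].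
  by move: a_q; rewrite (dominates_cvert_inj az lz) mem_last.
exact: IHq.
Qed.

(* A cycle c0 ... ck of cadj lifts, through the bridges between consecutive bags and
   detours through their centres, to a cycle of e. *)
Lemma cadj_acyclic : acyclic cadj.
Proof.
move=> c0 p p_path p_uniq p_size; apply/negP=> ck_c0; set ck := last c0 p in ck_c0.
have [ck_o o_i0 i0_c0] := bridgeP ck_c0.
set o := (bridge ck c0).1 in ck_o o_i0; set i0 := (bridge ck c0).2 in o_i0 i0_c0.
have c0_i0 : e (val c0) i0 by rewrite e_sym.
set w := lift c0 i0 p; set ik := last i0 w.
have ck_ik : e (val ck) ik := lift_last_adj p_path c0_i0.
have cyc_path : path e i0 (w ++ detour ck ik o).
  by rewrite cat_path lift_path // detour_path.
have cyc_uniq : uniq (i0 :: w ++ detour ck ik o).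
  have [ik_det det_uniq] : ik \notin detour ck ik o /\ uniq (detour ck ik o).
    by apply/andP; apply: detour_uniq.
  rewrite -cat_cons cat_uniq lift_uniq // det_uniq andbT; apply/hasPn=> z z_det.
  apply: contraNN ik_det => z_w.
  have z_ik : z = ik := lift_last_dominated p_path p_uniq c0_i0 z_w (detour_dominated ck_o z_det).
  by move: z_det; rewrite {1}z_ik.
have cyc_size : 2 <= size (w ++ detour ck ik o).
  by rewrite size_cat (leq_trans p_size) // (leq_trans (lift_size c0 i0 p)) // leq_addr.
by have := e_acyc cyc_path cyc_uniq cyc_size; rewrite last_cat last_detour // o_i0.
Qed.

End Contraction.

Theorem mainTheorem5 (T : finType) (e : rel T) :
  is_tree e -> 6 <= #|T| ->
  (in_Oprime e <-> max_two_packing e (weak_supports e)).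
Proof.
move=> [[e_sym e_irr] [e_conn e_acyc]] T_ge6; have T_gt2 : 2 < #|T| by apply: leq_trans T_ge6.
split=> [|W_max]; first exact: Oprime_max_two_packing.
have W_pack := proj1 W_max.
have W_dom := weak_supports_dominate e_sym e_conn T_gt2 W_max.
have W_leaf_nbr := leaf_neighbor_weak e_sym e_conn T_gt2 W_max.
exists (cvert e), (@cadj _ e); split.
  split; first by split; [apply: cadj_sym | apply: cadj_irr].
  by split; [apply: cadj_connected | apply: cadj_acyclic].
split; first exact: two_le_card_cvert.
exists (@cparts _ e); split; first exact: cparts_partition.
by exists (to_sub W_dom); split; [apply: to_sub_bij | apply: to_sub_adj].
Qed.
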